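(* Let $A=\mathrm{diag}(G_1,\dots,G_m,[1])\in\mathbb{R}^{n\times n}$ (where the trailing block $[1]$ may or may not be present), with $G_j=\begin{bmatrix}c_j&s_j\\-s_j&c_j\end{bmatrix}$, $c_j^2+s_j^2=1$, $s_j\neq 0$, and $0<c_1<c_2<\cdots<c_m$. Let $v_0\in\mathbb{R}^n$ be a unit norm vector with $d(A,v_0)\geq 2$ and $v_0^{(1)}\neq 0$, and run the iteration ACI($1$) below. Then there exist an index $k_0$ and a number $0<\varrho<1$ such that for all $k\geq k_0$, $$\|v_{k+1}^{(j)}\|\leq\varrho\,\|v_k^{(j)}\|,\qquad j=2,\dots,m+1$$ (with $j=m+1$ included only when the block $[1]$ is present).
   Context: Block partitioning: every $v\in\mathbb{R}^n$ is written as $v=[v^{(1)};\dots;v^{(m)};v^{(m+1)}]$ with $v^{(j)}\in\mathbb{R}^2$ for $j=1,\dots,m$ (conforming with the blocks $G_j$) and $v^{(m+1)}\in\mathbb{R}$ (present only if the block $[1]$ is present). ACI($1$): for $k=0,1,2,\dots$: $\widetilde w_k=(A-\alpha_kI)v_k$ with $\alpha_k=v_k^TAv_k$; $w_k=\widetilde w_k/\|\widetilde w_k\|$; $\widetilde v_{k+1}=(A^T-\beta_kI)w_k$ with $\beta_k=w_k^TAw_k$; $v_{k+1}=\widetilde v_{k+1}/\|\widetilde v_{k+1}\|$. $d(A,v)$ is the grade of $v$ w.r.t. $A$ (degree of the monic polynomial $p$ of smallest degree with $p(A)v=0$); $\|\cdot\|$ is the Euclidean norm. *)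

From mathcomp Require Import all_boot all_order all_algebra.
From mathcomp Require Import boolp reals.
Set Implicit Arguments. Unset Strict Implicit. Unset Printing Implicit Defensive.
Import Order.TTheory GRing.Theory Num.Theory.
Local Open Scope ring_scope.

Section ACI.
Variable R : realType.

(* Dimension: n = 2m + b, where b = true iff the trailing block [1] is present. *)
Definition dimA (m : nat) (b : bool) : nat := (m.*2 + b)%N.

(* Block index (1-based, as in the paper) of the 0-based coordinate i:
   coordinates 2(j-1), 2(j-1)+1 form block j (j = 1..m); coordinate 2m is
   the block m+1 (the trailing [1], present only if b). *)
Definition blk (i : nat) : nat := (i./2).+1.

(* A = diag(G_1,...,G_m,[1]),  G_j = [[c_j, s_j], [-s_j, c_j]]. *)
Definition Amat (m : nat) (b : bool) (c s : nat -> R) : 'M[R]_(dimA m b) :=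
  \matrix_(i, k)
    if blk i == blk k then
      (if (blk i <= m)%N then
         match odd i, odd k with
         | false, false => c (blk i)
         | false, true  => s (blk i)
         | true,  false => - s (blk i)
         | true,  true  => c (blk i)
         end
       else 1)
    else 0.

Definition vnorm n (x : 'cV[R]_n) : R := Num.sqrt (\sum_i x i 0 ^+ 2).

Definition bnorm n (x : 'cV[R]_n) (j : nat) : R :=
  Num.sqrt (\sum_(i : 'I_n | blk i == j) x i 0 ^+ 2).

Definition peval n (A : 'M[R]_n) (p : {poly R}) (v : 'cV[R]_n) : 'cV[R]_n :=
  \sum_(i < size p) p`_i *: iter i (fun x => A *m x) v.

Definition annih_deg n (A : 'M[R]_n) (v : 'cV[R]_n) (d : nat) : Prop :=
  exists p : {poly R}, [/\ p \is monic, size p = d.+1 & peval A p v = 0].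

(* grade d(A,v): degree of the monic polynomial of smallest degree with
   p(A) v = 0 (such a polynomial always exists, e.g. the characteristic
   polynomial; the default 0 in the other branch is never used). *)
Definition grade n (A : 'M[R]_n) (v : 'cV[R]_n) : nat :=
  match pselect (exists d, annih_deg A v d) with
  | left H =>
      @ex_minn (fun d => `[< annih_deg A v d >])
        (let: ex_intro d Hd := H in ex_intro _ d (asboolT Hd))
  | right _ => 0%N
  end.

Definition normalize n (x : 'cV[R]_n) : 'cV[R]_n := (vnorm x)^-1 *: x.

Definition rayq n (A : 'M[R]_n) (x : 'cV[R]_n) : R := (x^T *m A *m x) 0 0.

Definition aci_w n (A : 'M[R]_n) (v : 'cV[R]_n) : 'cV[R]_n :=
  normalize ((A - (rayq A v)%:M) *m v).

Definition aci_step n (A : 'M[R]_n) (v : 'cV[R]_n) : 'cV[R]_n :=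
  let w := aci_w A v in normalize ((A^T - (rayq A w)%:M) *m w).

Definition aci_v n (A : 'M[R]_n) (v0 : 'cV[R]_n) (k : nat) : 'cV[R]_n :=
  iter k (aci_step A) v0.

End ACI.

From mathcomp Require Import all_boot all_order all_algebra.
From mathcomp Require Import boolp reals.
From mathcomp Require Import ring lra zify.
Set Implicit Arguments. Unset Strict Implicit. Unset Printing Implicit Defensive.
Import Order.TTheory GRing.Theory Num.Theory.
Local Open Scope ring_scope.

(* Since every block is normal with eigenvalues c_j +- i s_j, a shift A - aI (or A^T - aI)
   multiplies the squared block norms ||x^(j)||^2 by g_j(a) = |c_j + i s_j - a|^2
   = 1 - 2 c_j a + a^2, with c_{m+1} = 1 for the block [1].  The Rayleigh quotients
   alpha_k, beta_k lie in [c_1, 1], and there g_j(a) <= q g_1(a) for j >= 2, where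
   q = 1 - delta c_1 < 1 and delta > 0 is the gap between c_1 and the other c_j.  Hence
   each half-step multiplies ||x^(j)||^2 / ||x^(1)||^2 by at most q, so the first block
   eventually carries mass ||v_k^(1)||^2 >= q, after which a full step multiplies
   ||v_k^(j)||^2 by at most q^2 / ||v_k^(1)||^2 <= q: one can take rho = sqrt q. *)

Lemma sum_involution_eq (R : numDomainType) (I : finType) (f : I -> I)
    (F G : I -> R) :
  involutive f -> (forall i, F i + F (f i) = G i + G (f i)) ->
  \sum_i F i = \sum_i G i.
Proof.
move=> fK FG.
have sum_twice H : (\sum_i H i) *+ 2 = \sum_i (H i + H (f i)) :> R.
  by rewrite mulr2n big_split /=; congr (_ + _); apply: reindex_inj; apply: can_inj fK.
apply: (mulIf (_ : 2%:R != 0)); first by rewrite pnatr_eq0.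
by rewrite !mulr_natr !sum_twice; apply: eq_bigr => i _; apply: FG.
Qed.

Lemma bernoulli_ineq (R : realDomainType) (t : R) k :
  0 <= t -> 1 + t *+ k <= (1 + t) ^+ k.
Proof.
move=> t_ge0; elim: k => [|k IHk]; first by rewrite mulr0n addr0 expr0.
have tk_ge0 : 0 <= t *+ k by rewrite mulrn_wge0.
have : (1 + t *+ k) * (1 + t) <= (1 + t) ^+ k * (1 + t).
  by rewrite ler_wpM2r // addr_ge0.
have : 0 <= t *+ k * t by rewrite mulr_ge0.
by rewrite exprSr mulrSr; lra.
Qed.

Lemma exprn_small (R : archiRealFieldType) (q e : R) :
  0 < q < 1 -> 0 < e -> exists k, q ^+ k <= e.
Proof.
case/andP=> q_gt0 q_lt1 e_gt0.
pose t := q^-1 - 1.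
have t_gt0 : 0 < t by rewrite subr_gt0 invf_gt1.
have [k lt_k] : exists k, e^-1 / t < k%:R.
  exists (Num.bound (e^-1 / t)); apply: archi_boundP.
  by rewrite divr_ge0 // ltW // invr_gt0.
exists k.
have kt : e^-1 <= t *+ k by rewrite -mulr_natl; apply/ltW; rewrite -ltr_pdivrMr.
have : e^-1 <= q^-1 ^+ k.
  have qt : 1 + t = q^-1 by rewrite /t addrC subrK.
  by have := bernoulli_ineq k (ltW t_gt0); rewrite qt; lra.
by rewrite exprVn -lef_pV2 ?posrE ?invr_gt0 ?exprn_gt0 // !invrK.
Qed.

Definition partner (i : nat) : nat := if odd i then i.-1 else i.+1.

Lemma half_partner i : (partner i)./2 = i./2.
Proof.
rewrite /partner; move: (odd_double_half i).
case: (odd i) => /= E; first by rewrite -{1}E add1n /= doubleK.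
by rewrite -{1}E add0n uphalf_double.
Qed.

Lemma odd_partner i : odd (partner i) = ~~ odd i.
Proof. by rewrite /partner; case: i => [|i] //=; case o_i: (odd i); rewrite /= ?o_i. Qed.

Lemma partnerK : involutive partner.
Proof. by move=> [|i]; rewrite /partner //=; case o_i: (odd i); rewrite /= ?o_i. Qed.

Lemma partner_neq i : partner i != i.
Proof. by apply/eqP => eq_i; have := odd_partner i; rewrite eq_i; case: (odd i). Qed.

Lemma half_eq_partner k i : k./2 = i./2 -> k = i \/ k = partner i.
Proof.
move=> eq_half; rewrite /partner.
move: (odd_double_half k) (odd_double_half i); rewrite eq_half.
set h := (i./2).*2.
by case: (odd i); case: (odd k) => /= <- <-; rewrite ?add0n ?add1n /=; auto.
Qed.

Section BlockMate.
Variables (m : nat) (b : bool).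
Local Notation n := (dimA m b).

Lemma blk_leq_m i : (blk i <= m)%N = (i < m.*2)%N.
Proof. by rewrite /blk ltn_half_double. Qed.

Lemma partner_ltn_double i : (partner i < m.*2)%N = (i < m.*2)%N.
Proof. by rewrite -!ltn_half_double half_partner. Qed.

Lemma partner_ltn_dim (i : 'I_n) : (partner i < n)%N = (i < m.*2)%N.
Proof.
case lt_i: (i < m.*2)%N.
  by apply: leq_trans (leq_addr b _); rewrite partner_ltn_double.
move: lt_i (ltn_ord i) (odd_double_half i); rewrite /partner -ltn_half_double.
move: (nat_of_ord i) (i./2) => j h; case: (odd j) => /= <-; rewrite /dimA; lia.
Qed.

(* The other coordinate of the same block; the trailing coordinate is its own mate. *)
Definition mate (i : 'I_n) : 'I_n := insubd i (partner i).

Lemma val_mate (i : 'I_n) : val (mate i) = if (i < m.*2)%N then partner i else i.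
Proof. by rewrite /mate val_insubd partner_ltn_dim. Qed.

Lemma blk_mate i : blk (mate i) = blk i.
Proof. by rewrite val_mate; case: ifP => // _; rewrite /blk half_partner. Qed.

Lemma mate_ltn_double (i : 'I_n) : (mate i < m.*2)%N = (i < m.*2)%N.
Proof. by rewrite val_mate; case: ifP => [|-> //]; rewrite partner_ltn_double. Qed.

Lemma mateK : involutive mate.
Proof.
move=> i; apply: val_inj; rewrite val_mate mate_ltn_double val_mate.
by case: ifP => lt_i; rewrite lt_i ?partnerK.
Qed.

Lemma odd_mate (i : 'I_n) : (i < m.*2)%N -> odd (mate i) = ~~ odd i.
Proof. by move=> lt_i; rewrite val_mate lt_i odd_partner. Qed.

Lemma mate_neq (i : 'I_n) : (i < m.*2)%N -> mate i != i.
Proof. by move=> lt_i; rewrite -val_eqE /= val_mate lt_i partner_neq. Qed.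

Lemma mate_id (i : 'I_n) : ~~ (i < m.*2)%N -> mate i = i.
Proof. by move=> /negbTE ge_i; apply: val_inj; rewrite val_mate ge_i. Qed.

Lemma blk_eq_mate (k i : 'I_n) : (blk k == blk i) = (k == i) || (k == mate i).
Proof.
apply/idP/idP => [|/orP[] /eqP ->]; rewrite ?blk_mate //.
rewrite /blk eqSS => /eqP /half_eq_partner [eq_ki|eq_k].
  by rewrite (val_inj eq_ki) eqxx.
case lt_i: (i < m.*2)%N.
  by apply/orP; right; apply/eqP/val_inj; rewrite /= val_mate lt_i.
by have := partner_ltn_dim i; rewrite lt_i -eq_k ltn_ord.
Qed.

End BlockMate.

Lemma mulmx_subr_scalar (R : pzRingType) n (M : 'M[R]_n) (a : R) (x : 'cV[R]_n) i :
  ((M - a%:M) *m x) i 0 = (M *m x) i 0 - a * x i 0.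
Proof. by rewrite mulmxBl mul_scalar_mx [LHS]mxE [X in _ + X]mxE [X in _ - X]mxE. Qed.

Section BlockDiagonal.
Variable R : realType.
Variables (m : nat) (b : bool) (c : nat -> R).
Local Notation n := (dimA m b).

(* Real part of the eigenvalues of block j. *)
Definition ceig (j : nat) : R := if (j <= m)%N then c j else 1.

(* |c_j + i s_j - a|^2 when c_j^2 + s_j^2 = 1 (see shift_gainE). *)
Definition shift_gain (j : nat) (a : R) : R := 1 - 2 * ceig j * a + a ^+ 2.

Definition offdiag (s : nat -> R) (i : nat) : R :=
  if odd i then - s (blk i) else s (blk i).

Lemma Amat_mulmx (s : nat -> R) (x : 'cV[R]_n) (i : 'I_n) :
  (Amat m b c s *m x) i 0 =
  ceig (blk i) * x i 0 + (if (i < m.*2)%N then offdiag s i * x (mate i) 0 else 0).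
Proof.
rewrite mxE (bigD1 i) //=; case lt_i: (i < m.*2)%N.
  rewrite (bigD1 (mate i)) /=; last by rewrite mate_neq.
  rewrite big1 ?addr0 => [|k /andP[ne_ki ne_k]]; last first.
    by rewrite mxE eq_sym blk_eq_mate (negbTE ne_ki) (negbTE ne_k) mul0r.
  rewrite !mxE eqxx blk_mate eqxx /ceig blk_leq_m lt_i odd_mate // /offdiag.
  by case: (odd i).
rewrite big1 ?addr0 => [|k ne_ki]; last first.
  by rewrite mxE eq_sym blk_eq_mate (negbTE ne_ki) mate_id ?lt_i // (negbTE ne_ki) mul0r.
by rewrite !mxE eqxx /ceig blk_leq_m lt_i; case: (odd i).
Qed.

Lemma trmx_Amat (s : nat -> R) : (Amat m b c s)^T = Amat m b c (fun j => - s j).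
Proof.
apply/matrixP => i k; rewrite !mxE eq_sym.
have [->|//] := eqVneq (blk i) (blk k).
by case: (_ <= _)%N => //; case: (odd i); case: (odd k); rewrite ?opprK.
Qed.

Definition wsq (h : nat -> R) (x : 'cV[R]_n) : R :=
  \sum_(i < n) h (blk i) * x i 0 ^+ 2.

Lemma shift_gainE (s : nat -> R) j a : (j <= m)%N -> c j ^+ 2 + s j ^+ 2 = 1 ->
  shift_gain j a = (c j - a) ^+ 2 + s j ^+ 2.
Proof. by move=> le_jm cs1; rewrite /shift_gain /ceig le_jm -{1}cs1; ring. Qed.

Lemma wsq_shift (s : nat -> R) :
  (forall j, (1 <= j <= m)%N -> c j ^+ 2 + s j ^+ 2 = 1) ->
  forall h a x, wsq h ((Amat m b c s - a%:M) *m x) = wsq (fun j => h j * shift_gain j a) x.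
Proof.
move=> cs1 h a x; apply: (sum_involution_eq (@mateK m b)) => i.
rewrite !mulmx_subr_scalar !Amat_mulmx.
rewrite mateK blk_mate mate_ltn_double; case lt_i: (i < m.*2)%N; last first.
  by rewrite /shift_gain /ceig blk_leq_m lt_i mate_id ?lt_i //; ring.
have le_im : (blk i <= m)%N by rewrite blk_leq_m.
rewrite (shift_gainE a le_im (cs1 _ _)) ?le_im ?andbT //.
by rewrite /ceig le_im /offdiag odd_mate // blk_mate; case: (odd i) => /=; ring.
Qed.

Lemma rayq_Amat (s : nat -> R) x : rayq (Amat m b c s) x = wsq ceig x.
Proof.
rewrite /rayq -mulmxA mxE; apply: (sum_involution_eq (@mateK m b)) => i.
rewrite ![x^T _ _]mxE !Amat_mulmx mateK blk_mate mate_ltn_double.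
case lt_i: (i < m.*2)%N; last by rewrite mate_id ?lt_i //; ring.
by rewrite /offdiag odd_mate // blk_mate; case: (odd i) => /=; ring.
Qed.

End BlockDiagonal.

Section WeightedNorm.
Variable R : realType.
Variables (m : nat) (b : bool).
Local Notation n := (dimA m b).
Local Notation wsq := (@wsq R m b).

Definition nsq (x : 'cV[R]_n) : R := wsq (fun=> 1) x.
Definition bsq (j : nat) (x : 'cV[R]_n) : R := wsq (fun k => (k == j)%:R) x.
Definition tailsq (x : 'cV[R]_n) : R := wsq (fun k => (k != 1)%:R) x.

Lemma wsq_ge0 h x : (forall j, (1 <= j)%N -> 0 <= h j) -> 0 <= wsq h x.
Proof. by move=> h_ge0; apply: sumr_ge0 => i _; rewrite mulr_ge0 ?sqr_ge0 ?h_ge0. Qed.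

Lemma ler_wsq h h' x :
  (forall j, (1 <= j)%N -> h j <= h' j) -> wsq h x <= wsq h' x.
Proof. by move=> le_h; apply: ler_sum => i _; rewrite ler_wpM2r ?sqr_ge0 ?le_h. Qed.

Lemma eq_wsq h h' x : (forall j, (1 <= j)%N -> h j = h' j) -> wsq h x = wsq h' x.
Proof. by move=> eq_h; apply: eq_bigr => i _; rewrite eq_h. Qed.

Lemma wsqZ (k : R) h x : wsq (fun j => k * h j) x = k * wsq h x.
Proof. by rewrite /wsq mulr_sumr; apply: eq_bigr => i _; rewrite mulrA. Qed.

Lemma wsqD h h' x : wsq (fun j => h j + h' j) x = wsq h x + wsq h' x.
Proof. by rewrite /wsq -big_split; apply: eq_bigr => i _; rewrite mulrDl. Qed.

Lemma bsq_ge0 j x : 0 <= bsq j x.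
Proof. by apply: wsq_ge0 => k _; case: (k == j). Qed.

Lemma tailsq_ge0 x : 0 <= tailsq x.
Proof. by apply: wsq_ge0 => k _; case: (k != 1%N). Qed.

Lemma bsq_gt0 j (x : 'cV[R]_n) (i : 'I_n) : blk i = j -> x i 0 != 0 -> 0 < bsq j x.
Proof.
move=> blk_i xi_neq0; rewrite /bsq /wsq (bigD1 i) //= blk_i eqxx mul1r.
rewrite ltr_pwDl ?exprn_even_gt0 //; apply: sumr_ge0 => k _.
by rewrite mulr_ge0 ?sqr_ge0 //; case: (_ == _).
Qed.

Lemma nsq_split x : nsq x = bsq 1 x + tailsq x.
Proof.
rewrite /bsq /tailsq -wsqD; apply: eq_wsq => k _.
by case: (k == 1%N); rewrite ?addr0 ?add0r.
Qed.

Lemma vnorm_sqrt x : vnorm x = Num.sqrt (nsq x).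
Proof. by rewrite /vnorm /nsq /wsq; congr Num.sqrt; apply: eq_bigr => i _; rewrite mul1r. Qed.

Lemma bnorm_sqrt x j : bnorm x j = Num.sqrt (bsq j x).
Proof.
rewrite /bnorm /bsq /wsq big_mkcond; congr Num.sqrt; apply: eq_bigr => i _.
by case: (blk i == j); rewrite ?mul1r ?mul0r.
Qed.

Lemma wsq_normalize h x : wsq h (normalize x) = wsq h x / nsq x.
Proof.
have nsq_ge0 : 0 <= nsq x by apply: wsq_ge0.
rewrite /normalize vnorm_sqrt /wsq mulr_suml; apply: eq_bigr => i _.
by rewrite mxE exprMn exprVn sqr_sqrtr //; ring.
Qed.

Lemma nsq_normalize x : nsq x != 0 -> nsq (normalize x) = 1.
Proof. by move=> nx_neq0; rewrite /nsq wsq_normalize divff. Qed.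

Definition tail_weight (h : nat -> R) : Prop :=
  h 1%N = 0 /\ forall j, (1 <= j)%N -> 0 <= h j.

Definition wsq_ratio (h : nat -> R) (x : 'cV[R]_n) : R := wsq h x / bsq 1 x.

Lemma wsq_ratio_normalize h x :
  nsq x != 0 -> wsq_ratio h (normalize x) = wsq_ratio h x.
Proof.
move=> nx_neq0; rewrite /wsq_ratio /bsq !wsq_normalize.
by rewrite invf_div mulrA divfK.
Qed.

Lemma bsq1_lower q x : 0 < q -> nsq x = 1 -> 0 < bsq 1 x ->
  wsq_ratio (fun k => (k != 1)%:R) x <= q^-1 - 1 -> q <= bsq 1 x.
Proof.
move=> q_gt0 nx1 b1_gt0; rewrite ler_pdivrMr // -/(tailsq x).
have := nsq_split x; rewrite nx1 => split1 tail_le.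
have : 1 <= q^-1 * bsq 1 x by lra.
by rewrite -ler_pdivrMl ?invr_gt0 // invrK mulr1.
Qed.

End WeightedNorm.

Section Convergence.
Variable R : realType.
Variables (m : nat) (b : bool) (c s : nat -> R).
Hypothesis m_gt0 : (0 < m)%N.
Hypothesis cs1 : forall j, (1 <= j <= m)%N -> c j ^+ 2 + s j ^+ 2 = 1.
Hypothesis s_neq0 : forall j, (1 <= j <= m)%N -> s j != 0.
Hypothesis c1_gt0 : 0 < c 1%N.
Hypothesis c_incr : forall j, (1 <= j < m)%N -> c j < c j.+1.
Local Notation ceig := (ceig m c).
Local Notation shift_gain := (shift_gain m c).

Lemma c_le1 j : (1 <= j <= m)%N -> c j <= 1.
Proof. by move=> /cs1; nra. Qed.

Lemma c_le i j : (1 <= i)%N -> (i <= j <= m)%N -> c i <= c j.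
Proof.
move=> i_gt0 /andP[]; elim: j => [|j IHj] le_ij le_jm; first by case: i i_gt0 le_ij.
rewrite leq_eqVlt in le_ij; case/orP: le_ij => [/eqP -> //|lt_ij].
apply: le_trans (IHj lt_ij (ltnW le_jm)) (ltW (c_incr _)).
by rewrite le_jm (leq_trans i_gt0).
Qed.

Lemma s1_sqr_gt0 : 0 < s 1%N ^+ 2.
Proof. by rewrite exprn_even_gt0 // s_neq0 ?m_gt0. Qed.

Lemma c1_lt1 : c 1%N < 1.
Proof. by have := cs1 (j := 1); have := s1_sqr_gt0; rewrite m_gt0 => ? /(_ isT); nra. Qed.

Definition gap : R := if (2 <= m)%N then c 2 - c 1 else 1 - c 1.

Lemma gap_gt0 : 0 < gap.
Proof.
rewrite /gap; case: ifP => [le2m|_]; rewrite subr_gt0 ?c1_lt1 //.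
by apply: c_incr; rewrite le2m.
Qed.

Lemma c1_gap_le1 : c 1%N + gap <= 1.
Proof.
rewrite /gap; case: ifP => [le2m|_]; last lra.
by have := c_le1 (j := 2); rewrite le2m => /(_ isT); lra.
Qed.

Lemma ceig_bounds j : (1 <= j)%N -> c 1%N <= ceig j <= 1.
Proof.
move=> j_gt0; rewrite /ceig; case: ifP => le_jm; last by rewrite lexx ltW ?c1_lt1.
by rewrite c_le ?c_le1 ?j_gt0 ?le_jm.
Qed.

Lemma ceig_gap j : (2 <= j)%N -> c 1%N + gap <= ceig j.
Proof.
move=> le2j; rewrite /ceig; case: ifP => le_jm; last exact: c1_gap_le1.
have le2m : (2 <= m)%N by apply: leq_trans le_jm.
by rewrite /gap le2m; have := c_le (i := 2) (j := j) isT; rewrite le2j le_jm => /(_ isT); lra.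
Qed.

Definition qrate : R := 1 - gap * c 1%N.

Lemma qrate_gt0 : 0 < qrate.
Proof.
have : gap * c 1%N <= (1 - c 1%N) * c 1%N.
  by rewrite ler_wpM2r ?(ltW c1_gt0) //; have := c1_gap_le1; lra.
by have := c1_lt1; rewrite /qrate; nra.
Qed.

Lemma qrate_lt1 : qrate < 1.
Proof. by rewrite /qrate; have := mulr_gt0 gap_gt0 c1_gt0; lra. Qed.

Lemma shift_gain1_gt0 a : 0 < shift_gain 1 a.
Proof.
rewrite (shift_gainE _ m_gt0 (cs1 _)) ?m_gt0 //.
by have := s1_sqr_gt0; have := sqr_ge0 (c 1%N - a); lra.
Qed.

(* For shifts in the numerical range [c_1, 1], the first block is damped least. *)
Lemma shift_gain_ratio j a : (2 <= j)%N -> c 1%N <= a <= 1 ->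
  shift_gain j a <= qrate * shift_gain 1 a.
Proof.
move=> le2j /andP[c1_le_a a_le1].
have c1_ge0 := ltW c1_gt0; have a_ge0 := le_trans c1_ge0 c1_le_a.
have ceig1 : ceig 1%N = c 1%N by rewrite /ceig m_gt0.
rewrite /shift_gain ceig1 /qrate.
have c1_gain : c 1%N * (1 - 2 * c 1%N * a + a ^+ 2) <= 2 * a.
  have : c 1%N * a ^+ 2 <= a by have := c1_lt1; nra.
  have : 0 <= c 1%N * c 1%N * a by rewrite !mulr_ge0.
  lra.
have : (c 1%N + gap) * a <= ceig j * a by rewrite ler_wpM2r // ceig_gap.
by have := gap_gt0; nra.
Qed.

Lemma rayq_bounds (s' : nat -> R) x : nsq x = 1 -> c 1%N <= rayq (Amat m b c s') x <= 1.
Proof.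
move=> nx1; rewrite rayq_Amat; apply/andP; split; last first.
  by rewrite -nx1; apply: ler_wsq => j /ceig_bounds /andP[].
rewrite -[c 1%N]mulr1 -nx1 -wsqZ; apply: ler_wsq => j /ceig_bounds /andP[].
by rewrite mulr1.
Qed.

Section Shift.
Variables (s' : nat -> R) (a : R).
Hypothesis cs1' : forall j, (1 <= j <= m)%N -> c j ^+ 2 + s' j ^+ 2 = 1.
Local Notation shift x := ((Amat m b c s' - a%:M) *m x).

Lemma bsq_shift j x : bsq j (shift x) = shift_gain j a * bsq j x.
Proof.
rewrite /bsq wsq_shift // -wsqZ; apply: eq_wsq => k _.
by case: eqP => [->|_]; rewrite ?mul1r ?mulr1 ?mul0r ?mulr0.
Qed.

Lemma wsq_ratio_shift h x : tail_weight h -> c 1%N <= a <= 1 -> 0 < bsq 1 x ->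
  wsq_ratio h (shift x) <= qrate * wsq_ratio h x.
Proof.
move=> [h1 h_ge0] a_range b1_gt0; have g1_gt0 := shift_gain1_gt0 a.
have damped : wsq (fun j => h j * shift_gain j a) x
              <= wsq (fun j => qrate * shift_gain 1 a * h j) x.
  apply: ler_wsq => j j_gt0; rewrite [X in _ <= X]mulrC.
  have [->|ne_j1] := eqVneq j 1%N; first by rewrite h1 !mul0r.
  rewrite ler_wpM2l ?h_ge0 ?shift_gain_ratio //.
  by move: j_gt0 ne_j1; case: j => [|[|j]].
rewrite /wsq_ratio bsq_shift wsq_shift // ler_pdivrMr ?mulr_gt0 //.
suff -> : qrate * (wsq h x / bsq 1 x) * (shift_gain 1 a * bsq 1 x) =
  wsq (fun j => qrate * shift_gain 1 a * h j) x by [].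
by rewrite wsqZ; field; apply: lt0r_neq0.
Qed.

Lemma normalize_shift x : c 1%N <= a <= 1 -> 0 < bsq 1 x ->
  let y := normalize (shift x) in
  [/\ nsq y = 1, 0 < bsq 1 y
    & forall h, tail_weight h -> wsq_ratio h y <= qrate * wsq_ratio h x].
Proof.
move=> a_range b1_gt0 y.
have b1z_gt0 : 0 < bsq 1 (shift x) by rewrite bsq_shift mulr_gt0 ?shift_gain1_gt0.
have nz_gt0 : 0 < nsq (shift x).
  apply: lt_le_trans b1z_gt0 _; rewrite nsq_split lerDl; exact: tailsq_ge0.
split => [||h h_tail]; first exact/nsq_normalize/lt0r_neq0.
  by rewrite /y /bsq wsq_normalize divr_gt0.
by rewrite wsq_ratio_normalize ?lt0r_neq0 // wsq_ratio_shift.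
Qed.

End Shift.

Local Notation A := (Amat m b c s).

Lemma aci_step_contract v : nsq v = 1 -> 0 < bsq 1 v ->
  let v' := aci_step A v in
  [/\ nsq v' = 1, 0 < bsq 1 v'
    & forall h, tail_weight h -> wsq_ratio h v' <= qrate ^+ 2 * wsq_ratio h v].
Proof.
move=> nv1 b1v_gt0 v'.
have [nw1 b1w_gt0 ratio_w] := normalize_shift cs1 (rayq_bounds s nv1) b1v_gt0.
have cs1N j : (1 <= j <= m)%N -> c j ^+ 2 + (- s j) ^+ 2 = 1 by rewrite sqrrN; apply: cs1.
have := normalize_shift cs1N (rayq_bounds s nw1) b1w_gt0.
rewrite -trmx_Amat -/(aci_step A v) -/v' => -[nv'1 b1v'_gt0 ratio_v'].
split => // h h_tail; apply: le_trans (ratio_v' h h_tail) _.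
by rewrite expr2 -mulrA ler_wpM2l ?(ltW qrate_gt0) ?ratio_w.
Qed.

Section Iteration.
Variable v0 : 'cV[R]_(dimA m b).
Hypothesis nv0 : nsq v0 = 1.
Hypothesis b1v0_gt0 : 0 < bsq 1 v0.
Local Notation v k := (aci_v A v0 k).

Lemma aci_v_normal k : nsq (v k) = 1 /\ 0 < bsq 1 (v k).
Proof.
elim: k => [//|k [nvk b1vk]]; rewrite /aci_v iterS.
by have [] := aci_step_contract nvk b1vk.
Qed.

Lemma aci_v_ratio h k : tail_weight h ->
  wsq_ratio h (v k) <= (qrate ^+ 2) ^+ k * wsq_ratio h v0.
Proof.
move=> h_tail; elim: k => [|k IHk]; first by rewrite expr0 mul1r.
have [nvk b1vk] := aci_v_normal k.
have [_ _ /(_ h h_tail) step] := aci_step_contract nvk b1vk.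
rewrite /aci_v iterS; apply: le_trans step _.
by rewrite [_ ^+ k.+1]exprS -mulrA ler_wpM2l ?sqr_ge0.
Qed.

(* Once the first block carries mass at least qrate, a step multiplies
   ||v^(j)||^2 by at most qrate^2 / ||v^(1)||^2 <= qrate. *)
Lemma bsq_aci_step j k : (2 <= j)%N -> qrate <= bsq 1 (v k) ->
  bsq j (v k.+1) <= qrate * bsq j (v k).
Proof.
move=> le2j b1_ge.
have [nvk b1vk] := aci_v_normal k; have [nvk1 b1vk1] := aci_v_normal k.+1.
have j_tail : tail_weight (fun i => (i == j)%:R : R).
  by split=> [|i _]; [case: j le2j => [|[|j]] | case: (i == j)].
have [_ _ /(_ _ j_tail)] := aci_step_contract nvk b1vk.
rewrite -/(aci_step A (v k)) /aci_v -iterS -/(v k.+1) /wsq_ratio -!/(bsq j _).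
have b1vk1_le1 : bsq 1 (v k.+1) <= 1 by rewrite -nvk1 nsq_split lerDl tailsq_ge0.
move=> step; apply: le_trans (le_trans _ step) _.
  by rewrite ler_pdivlMr // ler_piMr ?bsq_ge0.
rewrite expr2 -mulrA ler_wpM2l ?(ltW qrate_gt0) // mulrCA ler_piMr ?bsq_ge0 //.
by rewrite ler_pdivrMr // mul1r.
Qed.

Lemma aci_block_contraction : exists k0 : nat, exists rho : R,
  0 < rho < 1 /\
  forall k, (k0 <= k)%N -> forall j, (2 <= j)%N ->
    bnorm (v k.+1) j <= rho * bnorm (v k) j.
Proof.
pose tail := fun i => (i != 1%N)%:R : R.
have tail_tail : tail_weight tail by split=> // i _; case: (i != 1%N).
pose r0 := wsq_ratio tail v0.
have r0_ge0 : 0 <= r0 by rewrite divr_ge0 ?bsq_ge0 ?tailsq_ge0.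
have q_gt0 := qrate_gt0; have q_lt1 := qrate_lt1.
have [k0 small] : exists k0, (qrate ^+ 2) ^+ k0 <= (qrate^-1 - 1) / (r0 + 1).
  apply: exprn_small; first by rewrite exprn_gt0 // expr_lt1 ?ltW.
  by rewrite divr_gt0 ?subr_gt0 ?invf_gt1 // ltr_pwDr.
exists k0, (Num.sqrt qrate); split.
  by rewrite sqrtr_gt0 q_gt0 -sqrtr1 ltr_sqrt.
move=> k le_k j le2j.
have [nvk b1vk] := aci_v_normal k.
have b1_ge : qrate <= bsq 1 (v k).
  apply: (bsq1_lower q_gt0 nvk b1vk); move/le_trans: (aci_v_ratio k tail_tail); apply.
  have q2_ge0 : 0 <= qrate ^+ 2 := sqr_ge0 _.
  have q2_le1 : qrate ^+ 2 <= 1 by rewrite expr_le1 ?ltW.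
  apply: le_trans (_ : (qrate ^+ 2) ^+ k0 * (r0 + 1) <= _); last first.
    by rewrite -ler_pdivlMr ?ltr_pwDr.
  by apply: ler_pM; [exact: exprn_ge0 | | exact: ler_wiXn2l | rewrite lerDl].
rewrite !bnorm_sqrt -sqrtrM ?(ltW q_gt0) // ler_sqrt ?mulr_ge0 ?bsq_ge0 ?(ltW q_gt0) //.
exact: bsq_aci_step.
Qed.

End Iteration.
End Convergence.

Theorem lemma4p6 (R : realType) (m : nat) (b : bool) (c s : nat -> R)
  (v0 : 'cV[R]_(dimA m b)) :
  (0 < m)%N ->
  (forall j, (1 <= j <= m)%N -> c j ^+ 2 + s j ^+ 2 = 1) ->
  (forall j, (1 <= j <= m)%N -> s j != 0) ->
  0 < c 1%N ->
  (forall j, (1 <= j < m)%N -> c j < c j.+1) ->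
  vnorm v0 = 1 ->
  (2 <= grade (Amat m b c s) v0)%N ->
  [exists i : 'I_(dimA m b), (blk i == 1%N) && (v0 i 0 != 0)] ->
  exists k0 : nat, exists rho : R,
    0 < rho < 1 /\
    forall k, (k0 <= k)%N ->
    forall j, ((2 <= j <= m)%N || (b && (j == m.+1))) ->
      bnorm (aci_v (Amat m b c s) v0 k.+1) j
        <= rho * bnorm (aci_v (Amat m b c s) v0 k) j.
Proof.
(* The grade hypothesis is implied by the others (G_1 has no real eigenvector) and unused. *)
move=> m_gt0 cs1 s_neq0 c1_gt0 c_incr v0_unit _ /existsP[i /andP[/eqP blk_i v0i]].
have nv0 : nsq v0 = 1.
  by rewrite -[nsq v0]sqr_sqrtr ?wsq_ge0 // -vnorm_sqrt v0_unit expr1n.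
have [k0 [rho [rho_range contract]]] :=
  aci_block_contraction m_gt0 cs1 s_neq0 c1_gt0 c_incr nv0 (bsq_gt0 blk_i v0i).
exists k0, rho; split => // k le_k j j_range; apply: contract => //.
by case/orP: j_range => [/andP[]|/andP[_ /eqP->]].
Qed.
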